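(* Let $\eta>0$ be a constant and let $B\subseteq\mathbb T^d$ be a closed ball of radius $r>0$ centred at $0$ satisfying $n\,\mathrm{Vol}(B)=\Theta(r^dn)=\omega(1)$. Then with probability $1-(r^dn)^{-\Omega(\eta)}$ there is no vertex $v=(x_v,w_v)$ of the GIRG with $x_v\in\mathbb T^d\setminus B$ and $w_v\ge(\|x_v\|^dn)^{1/(\beta-1-\eta)}$.
   Context: Model (GIRG). Fix constants: $d\ge1$, $\beta\in(2,3)$, $\alpha\in(1,\infty]$, $w_{\min}>0$, a distribution $\mathcal D$ on $\mathbb R_{>0}$. Asymptotics refer to $n\to\infty$, with constants in $\Omega(\eta)$ depending only on model parameters. Ground space: torus $\mathbb T^d=\mathbb R^d/\mathbb Z^d$ with $\|x-y\|=\max_i\min\{|x_i-y_i|,1-|x_i-y_i|\}$, $\|x\|=\|x-0\|$; $\mathrm{Vol}$ = Lebesgue measure. Vertex positions: homogeneous Poisson point process of intensity $n$; independent weights $w_v\sim\mathcal D$ following a weak power law with exponent $\beta$: $\Pr[D\ge w_{\min}]=1$ and for every constant $\gamma>0$ there are constants $0<c_1\le c_2$ with $c_1w^{1-\beta-\gamma}\le\Pr[D\ge w]\le c_2w^{1-\beta+\gamma}$ for all $w\ge w_{\min}$. (Edges are irrelevant for this statement.) *)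

From HB Require Import structures.
From mathcomp Require Import all_boot all_order all_algebra.
From mathcomp Require Import all_classical all_reals all_analysis.
Set Implicit Arguments. Unset Strict Implicit. Unset Printing Implicit Defensive.
Import Order.TTheory GRing.Theory Num.Theory.
Import numFieldNormedType.Exports.
Local Open Scope classical_set_scope.
Local Open Scope ring_scope.

(** Torus T^d = R^d / Z^d.  Points are represented by tuples of reals
    (any representative); the torus distance to 0 in one coordinate is
    min {|a - k| : k integer} = min(frac a, 1 - frac a). *)
Definition circ_norm {R : realType} (a : R) : R :=
  let f := a - (Num.floor a)%:~R in Num.min f (1 - f).

Definition tnorm {R : realType} (dim : nat) (x : dim.-tuple R) : R :=
  \big[Num.max/0]_(i < dim) circ_norm (tnth x i).

(** Lebesgue measure (volume) on the torus, identified with [0,1]^dim: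
    iterated integral over the coordinates (for measurable sets this is the
    product Lebesgue measure restricted to the unit cube). *)
Fixpoint tvol {R : realType} (dim : nat) : set (dim.-tuple R) -> \bar R :=
  match dim return set (dim.-tuple R) -> \bar R with
  | 0 => fun A => if `[< A [tuple] >] then 1%E else 0%E
  | k.+1 => fun A =>
      (\int[@lebesgue_measure R]_(x in `[0%R, 1%R]%classic)
          tvol [set t : k.-tuple R | A [tuple of x :: t]])%E
  end.

Definition tball {R : realType} (dim : nat) (r : R) : set (dim.-tuple R) :=
  [set x | tnorm x <= r].

Definition mutually_independent {dT} {T : measurableType dT} {R : realType}
  (P : probability T R) {I : eqType} (E : I -> set (set T)) : Prop :=
  forall (J : seq I) (A : I -> set T), uniq J ->
    (forall k, k \in J -> E k (A k)) ->
    P (\bigcap_(k in [set` J]) A k) = (\prod_(k <- J) P (A k))%E.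

Definition weak_power_law {R : realType} (D : probability R R) (beta wmin : R)
  : Prop :=
  D [set w | wmin <= w] = 1%E /\
  forall gamma : R, 0 < gamma ->
    exists c1 c2 : R, 0 < c1 /\ c1 <= c2 /\
      forall w : R, wmin <= w ->
        ((c1 * w `^ (1 - beta - gamma))%:E <= D [set v | (w <= v)%R])%E /\
        (D [set v | (w <= v)%R] <= (c2 * w `^ (1 - beta + gamma))%:E)%E.

(** Vertex set of a GIRG with intensity n, realised on a probability space
    (T, P): a Poisson(n) number N of vertices, vertex i < N having position
    X i, uniform on the torus, and weight W i with law D; all of N, X 0, X 1,
    ..., W 0, W 1, ... mutually independent.  (This is the standard
    construction of the marked homogeneous Poisson point process of
    intensity n on T^d with i.i.d. marks of law D.) *)
Definition girg_vertices {dT} {T : measurableType dT} {R : realType}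
  (P : probability T R) (dim : nat) (D : probability R R) (n : R)
  (N : T -> nat) (X : nat -> {mfun T >-> dim.-tuple R})
  (W : nat -> {mfun T >-> R}) : Prop :=
  (forall k, measurable (N @^-1` [set k])) /\
  (forall k, P (N @^-1` [set k]) = (poisson_pmf n k)%:E) /\
  (forall i (A : set (dim.-tuple R)), measurable A ->
      P (X i @^-1` A) = tvol A) /\
  (forall i (A : set R), measurable A -> P (W i @^-1` A) = D A) /\
  mutually_independent P (fun k : option (nat + nat) =>
    match k with
    | None => [set N @^-1` S | S in [set: set nat]]
    | Some (inl i) => [set X i @^-1` S | S in measurable]
    | Some (inr i) => [set W i @^-1` S | S in measurable]
    end).

Arguments tball {R} dim r.

From HB Require Import structures.
From mathcomp Require Import all_boot all_order all_algebra.
From mathcomp Require Import all_classical all_reals all_analysis.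
From mathcomp Require Import measurable_realfun ring lra.
Set Implicit Arguments.
Unset Strict Implicit.
Unset Printing Implicit Defensive.
Import Order.TTheory GRing.Theory Num.Theory.
Import numFieldNormedType.Exports.
Local Open Scope classical_set_scope.
Local Open Scope ring_scope.

(** Write L = r^d n and p = 1/(beta - 1 - eta).  A vertex at x outside the
    ball is dangerous only if its weight reaches (|x|^d n)^p.  Cut the
    complement of the ball into the dyadic shells L 2^j < |x|^d n <= L 2^(j+1):
    shell j has volume at most 2^(d+1) L 2^j / n, and on it the weight must
    be at least (L 2^j)^p, which by the power law (with gamma = eta/2) has
    probability at most c (L 2^j)^(-1-delta) with delta = (eta/2) p > eta/4.
    Summing the geometric series over j, one vertex is dangerous with
    probability O(L^(-delta) / n), and since the Poisson number of vertices
    has mean n, a union bound gives probability O(L^(-delta)) <= L^(-eta/8)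
    for L large.  Independence is only available for rectangles
    {N = k} x {X_i in A} x {W_i in S}, which is why the event is covered by
    countably many of them rather than conditioned on. *)

Section torus_volume.
Variable R : realType.

Lemma measurable_floor :
  measurable_fun [set: R] (fun x : R => (Num.floor x)%:~R : R).
Proof.
move=> _ Y mY; rewrite setTI.
rewrite (_ : _ @^-1` Y = \bigcup_(z : int)
   (if pselect (Y (z%:~R : R)) then `[(z%:~R : R), (z + 1)%:~R[%classic
    else set0)).
  apply: countable_bigcupT_measurable; first exact: countableP.
  by move=> z; case: (pselect _) => //=.
apply/seteqP; split => x /=.
  move=> Yx; exists (Num.floor x) => //; case: (pselect _) => // _ /=.
  by rewrite in_itv /= floor_itv.
case=> z _; case: (pselect _) => //= Yz; rewrite in_itv /= => hz.
by rewrite (floor_def hz).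
Qed.

Lemma measurable_circ_norm : measurable_fun [set: R] (@circ_norm R).
Proof.
have mfrac : measurable_fun [set: R] (fun a : R => a - (Num.floor a)%:~R).
  by apply: measurable_funB => //; exact: measurable_floor.
exact: measurable_minr mfrac (measurable_funB _ mfrac).
Qed.

Lemma measurable_tnorm {dim} : measurable_fun [set: dim.-tuple R] (@tnorm R dim).
Proof.
rewrite /tnorm; elim: (index_enum _) => [|i s IH].
  by under eq_fun do rewrite big_nil; exact: measurable_cst.
under eq_fun do rewrite big_cons.
apply: measurable_maxr IH.
exact: measurableT_comp measurable_circ_norm (measurable_tnth _).
Qed.

Lemma measurable_tball dim (s : R) : measurable (tball dim s).
Proof.
rewrite -[tball _ _]setTI.
exact: measurable_fun_le measurable_tnorm (measurable_cst s).
Qed.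

Lemma measurable_circ_norm_le (s : R) : measurable [set a : R | circ_norm a <= s].
Proof.
rewrite -[X in measurable X]setTI.
exact: measurable_fun_le measurable_circ_norm (measurable_cst s).
Qed.

Lemma tnorm_ge0 dim (x : dim.-tuple R) : 0 <= tnorm x.
Proof. by rewrite /tnorm bigmax_idl le_max lexx. Qed.

Lemma tnorm_le dim (x : dim.-tuple R) (s : R) : 0 <= s ->
  tnorm x <= s <-> forall i, circ_norm (tnth x i) <= s.
Proof.
by move=> s0; split => [/bigmax_leP[_ le_s] i | le_s]; [exact: le_s | exact/bigmax_leP].
Qed.

Definition box k (A : set R) : set (k.-tuple R) := [set x | forall i, A (tnth x i)].
Arguments box : clear implicits.

Lemma box_cons k A (x : R) (t : k.-tuple R) :
  box k.+1 A [tuple of x :: t] <-> A x /\ box k A t.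
Proof.
split=> [Axt | [Ax At] i].
  by split=> [|i]; [exact: Axt ord0 | rewrite -(tnthS x); exact: Axt].
by case: (unliftP ord0 i) => [j ->|->]; first by rewrite tnthS.
Qed.

Lemma tvol_set0 k : tvol (set0 : set (k.-tuple R)) = 0%E.
Proof.
elim: k => [|k IH] /=; first by rewrite asboolF.
by rewrite (_ : (fun _ => _) = cst 0%E) ?integral0 //; apply: funext => x; exact: IH.
Qed.

Lemma tvol_ge0 dim (A : set (dim.-tuple R)) : (0 <= tvol A)%E.
Proof.
elim: dim A => [|k IH] A /=; first by case: (asboolP _).
by apply: integral_ge0 => x _; exact: IH.
Qed.

Lemma lebesgue_unit_fin_num (A : set R) : measurable A ->
  (lebesgue_measure (A `&` `[0%R, 1%R]%classic) \is a fin_num)%E.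
Proof.
move=> mA; rewrite ge0_fin_numE ?measure_ge0 //.
apply: (@le_lt_trans _ _ (lebesgue_measure (`[0%R, 1%R]%classic : set R))).
  by apply: le_measure => //; rewrite inE //; exact: measurableI.
by rewrite lebesgue_measure_itv /= lte01 oppr0 adde0 ltry.
Qed.

Lemma tvol_box k A : measurable A ->
  tvol (box k A) = (fine (lebesgue_measure (A `&` `[0%R, 1%R]%classic)) ^+ k)%:E.
Proof.
move=> mA; set m := fine _.
have mE : lebesgue_measure (A `&` `[0%R, 1%R]%classic) = m%:E.
  by rewrite fineK ?lebesgue_unit_fin_num.
elim: k => [|k IH] /=; first by rewrite expr0 asboolT // => -[].
rewrite (_ : (fun _ => _) = (fun x => (\1_A x)%:E * (m ^+ k)%:E)%E); last first.
  apply: funext => x; case: (pselect (A x)) => Ax.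
    rewrite indicE mem_set // mul1e -IH; congr tvol.
    by apply/seteqP; split => t /=; rewrite box_cons; [case | split].
  rewrite indicE memNset // mul0e -(tvol_set0 k); congr tvol.
  by apply/seteqP; split => t /=; rewrite box_cons; case.
rewrite ge0_integralZr //; first last.
- by rewrite lee_fin exprn_ge0 // fine_ge0 // measure_ge0.
- by apply/measurable_EFinP; apply: measurable_funTS; exact: measurable_indic.
rewrite integral_indic // exprS EFinM; congr (_ * _)%E; exact: mE.
Qed.

Lemma lebesgue_circ_norm_le (s : R) : 0 <= s ->
  (lebesgue_measure ([set a | (circ_norm a <= s)%R] `&` `[0%R, 1%R]%classic)
    <= (2 * s)%:E)%E.
Proof.
move=> s0.
have itv_le (x y : R) : x <= y ->
    (lebesgue_measure (`[x, y]%classic : set R) <= (y - x)%:E)%E.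
  move=> xy; rewrite lebesgue_measure_itv /=.
  by case: ltP => _; rewrite -?EFinD lee_fin ?subr_ge0.
apply: (@le_trans _ _
  (lebesgue_measure (`[0%R, s]%classic `|` `[1 - s, 1%R]%classic : set R))).
  apply: le_measure; rewrite ?inE.
  - by apply: measurableI; [exact: measurable_circ_norm_le | exact: measurable_itv].
  - by apply: measurableU; exact: measurable_itv.
  move=> x [/= hx]; rewrite in_itv /= => /andP[x0 x1].
  have [x_lt1 | x_ge1] := ltP x 1.
    have fl : Num.floor x = 0 by apply: floor_def; rewrite add0r x0 x_lt1.
    move: hx; rewrite /circ_norm fl subr0 ge_min => /orP[h|h].
      by left; rewrite /= in_itv /= x0 h.
    by right; rewrite /= in_itv /= x1 andbT lerBlDr addrC -lerBlDr.
  have -> : x = 1 by apply/eqP; rewrite eq_le x1 x_ge1.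
  by right; rewrite /= in_itv /= lexx andbT lerBlDl lerDr.
apply: le_trans (measureU2 _ _ _) _; try exact: measurable_itv.
rewrite mulr2n mulrDl mul1r EFinD.
apply: leeD; first by apply: le_trans (itv_le _ _ s0) _; rewrite subr0.
by apply: le_trans (itv_le _ _ _) _; rewrite ?gerBl // subKr.
Qed.

Lemma tball_box dim (s : R) : 0 <= s ->
  tball dim s = box dim [set a | circ_norm a <= s].
Proof. by move=> s0; apply/seteqP; split => x; rewrite /tball /= tnorm_le. Qed.

Lemma tvol_tball_le dim (s : R) : 0 <= s ->
  (tvol (tball dim s) <= ((2 * s) ^+ dim)%:E)%E.
Proof.
move=> s0; rewrite tball_box // tvol_box ?lee_fin; last exact: measurable_circ_norm_le.
apply: lerXn2r; rewrite ?nnegrE ?fine_ge0 ?measure_ge0 ?mulr_ge0 //.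
rewrite -lee_fin fineK; first exact: lebesgue_circ_norm_le.
exact: lebesgue_unit_fin_num (measurable_circ_norm_le s).
Qed.

Lemma tvol_tnormX_le dim (nn u : R) : (0 < dim)%N -> 0 < nn -> 0 <= u ->
  (tvol [set x : dim.-tuple R | (tnorm x ^+ dim * nn <= u)%R]
    <= (2 ^+ dim * (u / nn))%:E)%E.
Proof.
move=> d0 n0 u0.
have v0 : 0 <= u / nn by rewrite divr_ge0 // ltW.
pose s := (u / nn) `^ dim%:R^-1.
have s0 : 0 <= s by exact: powR_ge0.
have sX : s ^+ dim = u / nn.
  by rewrite -powR_mulrn // -powRrM mulVf ?powRr1 // pnatr_eq0 -lt0n.
have -> : [set x : dim.-tuple R | tnorm x ^+ dim * nn <= u] = tball dim s.
  apply/seteqP; split => x;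
  by rewrite /tball /= -ler_pdivlMr // -sX ler_pXn2r ?nnegrE ?tnorm_ge0.
by apply: (le_trans (tvol_tball_le dim s0)); rewrite exprMn sX.
Qed.

End torus_volume.

Section poisson_count.
Variable R : realType.

Lemma poisson_pmfS (nn : R) k : 0 < nn ->
  poisson_pmf nn k.+1 * k.+1%:R = nn * poisson_pmf nn k.
Proof.
move=> nn0; rewrite /poisson_pmf nn0 factS natrM invfM exprS.
have k_neq0 : k`!%:R != 0 :> R by rewrite pnatr_eq0 -lt0n fact_gt0.
have kS_neq0 : k.+1%:R != 0 :> R by rewrite pnatr_eq0.
by field; rewrite k_neq0 -[k.+1%:R]natr1 addrC in kS_neq0 *.
Qed.

Lemma nneseries_ub (f : nat -> \bar R) (M : \bar R) :
  (forall k, 0 <= f k)%E -> (forall m, \sum_(0 <= k < m) f k <= M)%E ->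
  (\sum_(0 <= k <oo) f k <= M)%E.
Proof.
move=> f0 fM; apply: lime_le; first exact: is_cvg_ereal_nneg_natsum.
exact: nearW.
Qed.

Context {dT : measure_display} {T : measurableType dT} (P : probability T R)
  (nn : R) (N : T -> nat).
Hypotheses (nn_gt0 : 0 < nn) (mN : forall k, measurable (N @^-1` [set k]))
  (lawN : forall k, P (N @^-1` [set k]) = (poisson_pmf nn k)%:E).

Lemma measurable_count_preimage (S : set nat) : measurable (N @^-1` S).
Proof.
rewrite (_ : N @^-1` S = \bigcup_(k in S) N @^-1` [set k]).
  by apply: bigcup_measurable => k _; exact: mN.
by apply/seteqP; split => om /=; [exists (N om) | case=> k Sk ->].
Qed.

Lemma sum_poisson_pmf_le1 m : \sum_(k < m) poisson_pmf nn k <= 1.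
Proof.
rewrite -lee_fin -sumEFin; under eq_bigr do rewrite -lawN.
rewrite -(@measure_bigsetU _ _ _ P (fun k => N @^-1` [set k])) //.
- by apply: probability_le1; apply: bigsetU_measurable => *; exact: mN.
- by move=> i j _ _ [om [/= -> <-]].
Qed.

Lemma sum_poisson_mean_le m : \sum_(k < m) k%:R * poisson_pmf nn k <= nn.
Proof.
case: m => [|m]; first by rewrite big_ord0 ltW.
rewrite big_ord_recl /= mul0r add0r.
under eq_bigr => i _ do rewrite /bump /= add1n mulrC poisson_pmfS //.
rewrite -mulr_sumr -[leRHS]mulr1; apply: ler_wpM2l; first exact: ltW.
exact: sum_poisson_pmf_le1.
Qed.

Lemma poisson_union_bound (E : nat -> set T) (q : R) : 0 <= q ->
  (forall i, measurable (E i)) ->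
  (forall k i, (P (N @^-1` [set k] `&` E i) <= (poisson_pmf nn k * q)%:E)%E) ->
  (P [set om | exists i, (i < N om)%N /\ E i om] <= (nn * q)%:E)%E.
Proof.
move=> q0 mE PE; set U := [set om | _].
have mU : measurable U.
  rewrite (_ : U = \bigcup_i (N @^-1` [set k | (i < k)%N] `&` E i)).
    apply: bigcupT_measurable => i.
    by apply: measurableI; [exact: measurable_count_preimage | exact: mE].
  by apply/seteqP; split => om [i]; [case=> ? ?; exists i | move=> _ [? ?]; exists i].
have PUk k : (P (U `&` N @^-1` [set k]) <= (k%:R * poisson_pmf nn k * q)%:E)%E.
  apply: le_trans
    (@content_subadditive _ _ _ P _ (fun i => N @^-1` [set k] `&` E i) k _ _ _) _.
  - by move=> i _; apply: measurableI.
  - exact: measurableI.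
  - rewrite -(bigcup_mkord k (fun i => N @^-1` [set k] `&` E i)).
    by move=> om [[i [ik Ei]] Nk]; exists i; [rewrite /= -Nk | split].
  apply: (@le_trans _ _ (\sum_(i < k) (poisson_pmf nn k * q)%:E)%E).
    by apply: lee_sum => i _; exact: PE.
  by rewrite sumEFin sumr_const card_ord lee_fin -mulrA mulr_natl.
apply: (le_trans
  (measure_sigma_subadditive _ (F := fun k => U `&` N @^-1` [set k]) _ _ _)).
- by move=> k; apply: measurableI.
- exact: mU.
- by move=> om Uom; exists (N om).
apply: nneseries_ub => [k|m]; first exact: measure_ge0.
apply: (@le_trans _ _ (\sum_(0 <= k < m) (k%:R * poisson_pmf nn k * q)%:E)%E).
  by apply: lee_sum => k _; exact: PUk.
rewrite sumEFin lee_fin -mulr_suml big_mkord.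
by apply: ler_wpM2r => //; exact: sum_poisson_mean_le.
Qed.

End poisson_count.

Lemma dyadic_bracket {R : realType} (L y : R) : 0 < L -> L < y ->
  exists j, L * 2 ^+ j < y <= L * 2 ^+ j.+1.
Proof.
move=> L0 Ly.
have ex : exists m, y <= L * 2 ^+ m.
  exists (Num.truncn (y / L)).+1; rewrite -ler_pdivrMl // mulrC.
  apply/ltW/(lt_le_trans (truncnS_gt _)).
  by rewrite -natrX ler_nat ltnW // ltn_expl.
case: (ex_minnP ex) => -[|j]; first by rewrite expr0 mulr1 leNgt Ly.
move=> yj jmin; exists j; rewrite yj andbT ltNge; apply/negP => /jmin.
by rewrite ltnn.
Qed.

Section far_heavy_vertices.
Context {R : realType} {dT : measure_display} {T : measurableType dT}
  (P : probability T R) (dim : nat) (D : probability R R) (nn : R)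
  (N : T -> nat) (X : nat -> {mfun T >-> dim.-tuple R})
  (W : nat -> {mfun T >-> R}).
Hypothesis HG : girg_vertices P D nn N X W.

Lemma girg_rectangle_prob k i (B : set (dim.-tuple R)) (S : set R) :
  measurable B -> measurable S ->
  P (N @^-1` [set k] `&` (X i @^-1` B `&` W i @^-1` S)) =
  ((poisson_pmf nn k)%:E * (tvol B * D S))%E.
Proof.
move=> mB mS; case: HG => _ [lawN [lawX [lawW indep]]].
pose A (o : option (nat + nat)) : set T := match o with
  | None => N @^-1` [set k]
  | Some (inl _) => X i @^-1` B
  | Some (inr _) => W i @^-1` S end.
have := indep [:: None; Some (inl i); Some (inr i)] A isT.
have -> : \bigcap_(o in [set` [:: None; Some (inl i); Some (inr i)]]) A o =
    N @^-1` [set k] `&` (X i @^-1` B `&` W i @^-1` S).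
  apply/seteqP; split => om; last by move=> [Nk [Xi Wi]] [[j|j]|].
  move=> Aom; split; first by apply: (Aom None); rewrite /= inE eqxx.
  split; first by apply: (Aom (Some (inl i))); rewrite /= !inE eqxx orbT.
  by apply: (Aom (Some (inr i))); rewrite /= !inE eqxx !orbT.
rewrite !big_cons big_nil mule1 /= lawN lawX // lawW // => -> //.
move=> [[j|j]|] /=; rewrite !inE.
- by move=> /orP[//|/orP[/eqP [->]|//]]; exists B.
- by move=> /orP[//|/orP[//|/eqP [->]]]; exists S.
- by move=> _; exists [set k].
Qed.

Variables (r p a c2 wmin : R).
Hypotheses (dim_gt0 : (0 < dim)%N) (nn_gt0 : 0 < nn) (r_gt0 : 0 < r)
  (p_ge0 : 0 <= p) (delta_gt0 : 0 < a * p - 1) (c2_ge0 : 0 <= c2)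
  (tailD : forall w, wmin <= w ->
     (D [set v | (w <= v)%R] <= (c2 * w `^ (- a))%:E)%E)
  (wmin_le : wmin <= (r ^+ dim * nn) `^ p).

Local Notation L := (r ^+ dim * nn).
Local Notation delta := (a * p - 1).
Local Notation rho := (2 `^ (- delta) : R).
Let inner j := [set x : dim.-tuple R | (tnorm x ^+ dim * nn <= L * 2 ^+ j.+1)%R].
Let heavy j := [set w : R | ((L * 2 ^+ j) `^ p <= w)%R].
Let far_heavy i := [set om | ~ tball dim r (X i om) /\
  (tnorm (X i om) ^+ dim * nn) `^ p <= W i om].

Let L_gt0 : 0 < L. Proof. by rewrite mulr_gt0 // exprn_gt0. Qed.

Let rho_lt1 : rho < 1.
Proof.
rewrite powRN invf_lt1 ?powR_gt0 // /powR (negbTE (lt0r_neq0 (ltr0n _ 2))).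
by rewrite expR_gt1 mulr_gt0 // ln_gt0 // ltr1n.
Qed.

Let shell_coef_ge0 : 0 <= 2 ^+ dim.+1 * c2 / nn * L `^ (- delta).
Proof. by rewrite mulr_ge0 ?powR_ge0 // divr_ge0 ?mulr_ge0 ?exprn_ge0 // ltW. Qed.

Let powR_dyadic j : (L * 2 ^+ j) `^ (- delta) = L `^ (- delta) * rho ^+ j.
Proof.
rewrite powRM ?(ltW L_gt0) ?exprn_ge0 // -[2 ^+ j]powR_mulrn // -powRrM.
by rewrite [_ * - _]mulrC powRrM powR_mulrn ?powR_ge0.
Qed.

Lemma measurable_far_heavy i : measurable (far_heavy i).
Proof.
have mthr : measurable_fun [set: dim.-tuple R] (fun x => (tnorm x ^+ dim * nn) `^ p).
  apply: measurableT_comp (measurable_powR _) _.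
  by apply: measurable_funM => //; apply: measurable_funX; exact: measurable_tnorm.
rewrite (_ : far_heavy i = X i @^-1` (~` tball dim r) `&`
    (setT `&` [set om | (tnorm (X i om) ^+ dim * nn) `^ p <= W i om])).
  apply: measurableI.
    by apply: measurable_funPTI; apply: measurableC; exact: measurable_tball.
  exact: measurable_fun_le
    (measurableT_comp mthr (measurable_funP _)) (measurable_funP _).
by apply/seteqP; split => om [Xr Wp] //; case: Wp.
Qed.

Lemma far_heavy_cover i om :
  far_heavy i om -> exists j, inner j (X i om) /\ heavy j (W i om).
Proof.
move=> [/negP Xr Wheavy]; rewrite /tball /= -ltNge in Xr.
have [|j /andP[lo hi]] := @dyadic_bracket _ L (tnorm (X i om) ^+ dim * nn) L_gt0.
  by rewrite ltr_pM2r // ltrXn2r ?ltW // -lt0n.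
exists j; split=> //; apply: le_trans Wheavy.
apply: (ge0_ler_powR p_ge0 _ _ (ltW lo));
by rewrite nnegrE ?mulr_ge0 ?exprn_ge0 ?tnorm_ge0 ?ltW.
Qed.

Lemma rectangle_bound j : (tvol (inner j) * D (heavy j)
  <= (2 ^+ dim.+1 * c2 / nn * L `^ (- delta) * rho ^+ j)%:E)%E.
Proof.
have Lj_gt0 : 0 < L * 2 ^+ j by rewrite mulr_gt0 // exprn_gt0.
have volB := tvol_tnormX_le dim_gt0 nn_gt0
  (ltW (mulr_gt0 L_gt0 (exprn_gt0 j.+1 (ltr0n R 2)))).
have tailB : (D (heavy j) <= (c2 * ((L * 2 ^+ j) `^ p) `^ (- a))%:E)%E.
  apply: tailD; apply: (le_trans wmin_le).
  apply: (ge0_ler_powR p_ge0); rewrite ?nnegrE ?(ltW L_gt0) ?(ltW Lj_gt0) //.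
  by rewrite ler_peMr ?(ltW L_gt0) // exprn_ege1 // ler1n.
apply: le_trans (lee_pmul (tvol_ge0 _) (measure_ge0 _ _) volB tailB) _.
rewrite -EFinM lee_fin le_eqVlt; apply/orP; left; apply/eqP.
rewrite -powRrM (_ : p * - a = - 1 + - delta); last by ring.
rewrite powRD ?lt0r_neq0 ?implybT // powR_inv1 ?ltW // powR_dyadic.
by rewrite !exprS; field; rewrite !gt_eqF ?exprn_gt0.
Qed.

Lemma far_heavy_prob k i : (P (N @^-1` [set k] `&` far_heavy i)
  <= (poisson_pmf nn k * (2 ^+ dim.+1 * c2 / nn * L `^ (- delta) / (1 - rho)))%:E)%E.
Proof.
have mN : measurable (N @^-1` [set k]) by case: HG.
have minner j : measurable (inner j).
  rewrite -[inner j]setTI; apply: measurable_fun_le => //.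
  by apply: measurable_funM => //; apply: measurable_funX; exact: measurable_tnorm.
have mheavy j : measurable (heavy j).
  rewrite (_ : heavy j = `[(L * 2 ^+ j) `^ p, +oo[%classic); first exact: measurable_itv.
  by apply/seteqP; split => w /=; rewrite in_itv /= andbT.
pose F j := N @^-1` [set k] `&` (X i @^-1` inner j `&` W i @^-1` heavy j).
have mF j : measurable (F j).
  by apply: measurableI => //; apply: measurableI; exact: measurable_funPTI.
apply: (le_trans (measure_sigma_subadditive _ (F := F) mF _ _)).
- by apply: measurableI => //; exact: measurable_far_heavy.
- by move=> om [Nk /far_heavy_cover[j [Xj Wj]]]; exists j.
apply: nneseries_ub => [j|m]; first exact: measure_ge0.
apply: (@le_trans _ _ (\sum_(0 <= j < m) ((poisson_pmf nn k)%:E *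
  (2 ^+ dim.+1 * c2 / nn * L `^ (- delta) * rho ^+ j)%:E))%E).
  apply: lee_sum => j _.
  rewrite [Z in (Z <= _)%E](_ : _ =
    (poisson_pmf nn k)%:E * (tvol (inner j) * D (heavy j)))%E; last first.
    exact: girg_rectangle_prob.
  by apply: lee_wpmul2l; [rewrite lee_fin poisson_pmf_ge0 | exact: rectangle_bound].
rewrite sumEFin lee_fin -mulr_sumr; apply: ler_wpM2l; first exact: poisson_pmf_ge0.
by apply: geometric_le_lim => //; rewrite ger0_norm // ltW.
Qed.

Lemma far_heavy_vertices_prob :
  (P [set om | exists i, (i < N om)%N /\ far_heavy i om]
    <= (2 ^+ dim.+1 * c2 / (1 - rho) * L `^ (- delta))%:E)%E.
Proof.
case: HG => mN [lawN _].
have rho_neq1 : 1 - rho != 0 by rewrite subr_eq0 gt_eqF.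
have -> : 2 ^+ dim.+1 * c2 / (1 - rho) * L `^ (- delta) =
    nn * (2 ^+ dim.+1 * c2 / nn * L `^ (- delta) / (1 - rho)).
  by field; rewrite rho_neq1 gt_eqF.
apply: (poisson_union_bound nn_gt0 mN lawN _ measurable_far_heavy far_heavy_prob).
by rewrite divr_ge0 // subr_ge0 ltW.
Qed.

End far_heavy_vertices.

Lemma cvgry_ge_powR {R : realType} (u : nat -> R) (y e : R) : 0 < e ->
  u @ \oo --> +oo -> \forall n \near \oo, y <= u n `^ e.
Proof.
move=> e0 /cvgryPge/(_ (Num.max y 0 `^ e^-1)); apply: filterS => n un.
have m0 : 0 <= Num.max y 0 by rewrite le_max lexx orbT.
apply: (@le_trans _ _ (Num.max y 0)); first by rewrite le_max lexx.
rewrite -[leLHS](powRr1 m0) -(mulVf (lt0r_neq0 e0)) powRrM.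
have u0 : 0 <= u n by apply: le_trans un; exact: powR_ge0.
by apply: (ge0_ler_powR (ltW e0)) un; rewrite nnegrE ?powR_ge0.
Qed.

Lemma mul_powRN_le {R : realType} (K x d e : R) : 0 < x ->
  K <= x `^ (d - e) -> K * x `^ (- d) <= x `^ (- e).
Proof.
move=> x0 Kx; rewrite (_ : - e = (d - e) + - d); last by ring.
by rewrite powRD ?lt0r_neq0 ?implybT // ler_wpM2r ?powR_ge0.
Qed.

Lemma far_heavy_exponent_gt {R : realType} (beta eta : R) :
  0 < eta -> eta < beta - 1 -> beta < 3 ->
  eta / 4 < (beta - 1 - eta / 2) * (1 / (beta - 1 - eta)) - 1.
Proof.
move=> eta0 eta_lt beta_lt3; have b0 : 0 < beta - 1 - eta by rewrite subr_gt0.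
rewrite (_ : _ - 1 = eta / 2 / (beta - 1 - eta)); last by field; rewrite gt_eqF.
rewrite ltr_pdivlMr //; have b2 : beta - 1 - eta < 2 by lra.
nra.
Qed.


Theorem lemma5p4 (R : realType) (dim : nat) (beta : R) (alpha : \bar R)
  (wmin : R) (D : probability R R) :
  (1 <= dim)%N -> 2 < beta < 3 -> (1%:E < alpha)%E -> 0 < wmin ->
  weak_power_law D beta wmin ->
  exists c : R, 0 < c /\
  forall eta : R, 0 < eta -> eta < beta - 1 ->
  forall r : nat -> R, (forall n, 0 < r n) ->
    (exists C1 C2 : R, 0 < C1 /\ 0 < C2 /\
       \forall n \near \oo,
         C1 * (r n ^+ dim * n%:R) <= fine (n%:R%:E * tvol (tball dim (r n)))%E
         /\ fine (n%:R%:E * tvol (tball dim (r n)))%E <= C2 * (r n ^+ dim * n%:R)) ->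
    (fun n : nat => r n ^+ dim * n%:R) @ \oo --> +oo ->
  \forall n \near \oo,
    forall dT (T : measurableType dT) (P : probability T R)
      (N : T -> nat) (X : nat -> {mfun T >-> dim.-tuple R})
      (W : nat -> {mfun T >-> R}),
    girg_vertices P D n%:R N X W ->
    (P [set om | exists i, (i < N om)%N /\
         ~ tball dim (r n) (X i om) /\
         ((tnorm (X i om) ^+ dim * n%:R) `^ (1 / (beta - 1 - eta)) <= W i om)%R]
     <= ((r n ^+ dim * n%:R) `^ (- (c * eta)))%:E)%E.
Proof.
move=> dim_gt0 /andP[_ beta_lt3] _ _ [_ power_law].
exists 8^-1; split=> // eta eta_gt0 eta_lt r r_gt0 _ L_to_oo.
have [c1 [c2 [c1_gt0 [c12 tail]]]] := power_law (eta / 2) (divr_gt0 eta_gt0 (ltr0n R 2)).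
set p := 1 / (beta - 1 - eta); set a := beta - 1 - eta / 2.
have p_gt0 : 0 < p by rewrite divr_gt0 // subr_gt0.
have delta_gt : eta / 4 < a * p - 1 := far_heavy_exponent_gt eta_gt0 eta_lt beta_lt3.
have tailD w : wmin <= w -> (D [set v | (w <= v)%R] <= (c2 * w `^ (- a))%:E)%E.
  by move=> /tail[_]; rewrite (_ : 1 - beta + eta / 2 = - a) // /a; ring.
near=> n => dT T P N X W HG.
have n_gt0 : 0 < n%:R :> R by rewrite ltr0n; near: n; exists 1%N.
apply: (le_trans (far_heavy_vertices_prob HG dim_gt0 n_gt0 (r_gt0 n) (ltW p_gt0)
  _ (ltW (lt_le_trans c1_gt0 c12)) tailD _)).
- by apply: (lt_trans _ delta_gt); rewrite divr_gt0.
- by near: n; exact: (cvgry_ge_powR _ p_gt0 L_to_oo).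
rewrite lee_fin; apply: mul_powRN_le; first by rewrite mulr_gt0 ?exprn_gt0.
by near: n; apply: (cvgry_ge_powR _ _ L_to_oo); lra.
Unshelve. all: by end_near.
Qed.
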